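(* Let $\theta\in(0,\pi)$ and $u\in\mathscr{C}^\infty_0(\mathbb{R}_+)$, and define $$\mathscr{K}_\theta(u)(t):=\int_0^\infty(st)^{-1/4}\mathfrak{K}_\theta(t/s)u(s)\,ds,\qquad t>0,$$ where $\mathfrak{K}_\theta(\tau):=\big(4\sin^2(\theta)+(\sqrt\tau-1/\sqrt\tau)^2\big)^{-1/4}$. Then for every $\beta\in(0,1/2)$, $$\int_0^\infty|\mathscr{K}_\theta(u)(t)|^2\,t^{2\beta}\,\frac{dt}{t}<+\infty,$$ i.e. $\mathscr{K}_\theta(u)\in\mathcal{L}^2_{-\beta}(\mathbb{R}_+)$.
   Context: $\mathscr{C}^\infty_0(\mathbb{R}_+)$: smooth functions on $[0,\infty)$ with bounded support contained in $(0,\infty)$. For $\gamma\in\mathbb{R}$, $\mathcal{L}^2_\gamma(\mathbb{R}_+)$ is the completion of $\mathscr{C}^\infty_0(\mathbb{R}_+)$ for the norm $\|u\|^2_{\mathcal{L}^2_\gamma(\mathbb{R}_+)}:=\int_0^\infty|u(r)|^2r^{-2\gamma}\,dr/r$. *)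

From HB Require Import structures.
From mathcomp Require Import all_boot all_order all_algebra.
From mathcomp Require Import all_classical all_reals all_analysis.
Set Implicit Arguments. Unset Strict Implicit. Unset Printing Implicit Defensive.
Import Order.TTheory GRing.Theory Num.Theory.
Import numFieldNormedType.Exports.
Local Open Scope classical_set_scope.
Local Open Scope ring_scope.

Definition smooth (R : realType) (f : R -> R) : Prop :=
  forall (n : nat) (x : R), derivable (iter n (fun g : R -> R => derive1 g) f) x 1.

(* C^infty_0(R_+): smooth on [0,oo) with bounded support contained in (0,oo);
   extended by zero to R, this means smooth on R with support in some [a,b], 0<a. *)
Definition Cinf0_Rplus (R : realType) (u : R -> R) : Prop :=
  smooth u /\ exists a b : R, 0 < a /\ forall s, (s < a \/ b < s) -> u s = 0.

Definition frakK (R : realType) (theta tau : R) : R :=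
  (4 * (sin theta) ^+ 2 + (Num.sqrt tau - (Num.sqrt tau)^-1) ^+ 2) `^ (- (4%:R)^-1).

Definition scrK (R : realType) (theta : R) (u : R -> R) (t : R) : R :=
  Rintegral (@lebesgue_measure R) `]0, +oo[
    (fun s => (s * t) `^ (- (4%:R)^-1) * frakK theta (t / s) * u s).

From HB Require Import structures.
From mathcomp Require Import all_boot all_order all_algebra.
From mathcomp Require Import all_classical all_reals all_analysis.
From mathcomp Require Import ring lra measurable_realfun.
Import Order.TTheory GRing.Theory Num.Theory.
Import numFieldNormedType.Exports.
Local Open Scope classical_set_scope.
Local Open Scope ring_scope.

(* For [s >= a] the kernel satisfies
   [(s t)^(-1/4) frakK(t/s) = (4 sin^2 theta s t + (t - s)^2)^(-1/4)
                            <= (sin theta max(a, t))^(-1/2)],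
   so if [|u| <= M] and [u] vanishes outside [[a, b]], then
   [scrK(u)(t)^2 <= M^2 (b - a)^2 / (sin theta max(a, t))].
   The weighted integrand is therefore [O(t^(2 beta - 1))] near [0] and
   [O(t^(2 beta - 2))] near [+oo], both integrable since [0 < beta < 1/2];
   integrability of [t^p] is checked on dyadic shells [[l, 2 l[], whose
   contributions form a geometric series. *)

Section integral_comparison.
Context d (T : measurableType d) {R : realType}.
Variable mu : {measure set T -> \bar R}.

(* The nonnegative integral is a supremum over the simple functions below the
   integrand, hence monotone without any measurability assumption: this is what
   allows bounding [scrK] without proving its integrand measurable. *)
Lemma ge0_le_integral_restrict (D1 D2 : set T) (f g : T -> \bar R) :
  (forall x, D1 x -> (0 <= f x)%E) -> (forall x, D2 x -> (0 <= g x)%E) ->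
  (forall x, ((f \_ D1) x <= (g \_ D2) x)%E) ->
  (\int[mu]_(x in D1) f x <= \int[mu]_(x in D2) g x)%E.
Proof.
move=> f0 g0 fg; rewrite !ge0_integralE //.
apply: ereal_sup_le => _ [h hf <-]; exists h => //= x.
exact: le_trans (hf x) (fg x).
Qed.

Lemma ge0_le_integral_nonmeasurable (D : set T) (f g : T -> \bar R) :
  (forall x, D x -> (0 <= f x <= g x)%E) ->
  (\int[mu]_(x in D) f x <= \int[mu]_(x in D) g x)%E.
Proof.
move=> fg; apply: ge0_le_integral_restrict => [x /fg /andP[]//|x|x].
  by move=> /fg /andP[f0]; apply: le_trans.
by rewrite /patch; case: ifP => // /[1!in_setE] /fg /andP[].
Qed.

Lemma integral_lty_dominated (D : set T) (f g : T -> R) (c : R) :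
  measurable D -> measurable_fun D g -> 0 <= c -> (forall x, D x -> 0 <= g x) ->
  (forall x, D x -> 0 <= f x <= c * g x) ->
  (\int[mu]_(x in D) (g x)%:E < +oo)%E -> (\int[mu]_(x in D) (f x)%:E < +oo)%E.
Proof.
move=> mD mg c0 g0 fg g_lty.
apply: (@le_lt_trans _ _ (\int[mu]_(x in D) (c%:E * (g x)%:E))%E).
  apply: ge0_le_integral_nonmeasurable => x /fg /andP[f0 fcg].
  by rewrite -EFinM !lee_fin f0.
rewrite ge0_integralZl_EFin //; last exact/measurable_EFinP.
  by rewrite lte_mul_pinfty ?lee_fin.
Qed.

End integral_comparison.

Section integral_bounds.
Context {R : realType}.
Local Notation mu := (@lebesgue_measure R).

Lemma ge0_integral_le_indic (D : set R) (g : R -> \bar R) (K a b : R) :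
  0 <= K -> a <= b ->
  (forall x, D x -> (0 <= g x <= (K * \1_`[a, b] x)%:E)%E) ->
  (\int[mu]_(x in D) g x <= (K * (b - a))%:E)%E.
Proof.
move=> K0 ab gK.
apply: (@le_trans _ _ (\int[mu]_(x in `[a, b]) (cst K%:E) x)%E).
  apply: ge0_le_integral_restrict => [x /gK /andP[]//|x _|x]; first by rewrite lee_fin.
  rewrite /patch; case: ifP => [/[1!in_setE] /gK /andP[_]|_]; last by case: ifP.
  rewrite indicE; case: ifP; rewrite ?mulr1 ?mulr0 //.
rewrite integral_cst //= lebesgue_measure_itv /= lte_fin.
case: ifPn => [_|]; first by rewrite -EFinD -EFinM.
by rewrite -leNgt => ba; rewrite mule0 lee_fin mulr_ge0 // subr_ge0.
Qed.

Lemma normr_Rintegral_le_indic (D : set R) (h : R -> R) (K a b : R) :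
  0 <= K -> a <= b -> (forall x, D x -> `|h x| <= K * \1_`[a, b] x) ->
  `|Rintegral mu D h| <= K * (b - a).
Proof.
move=> K0 ab hK; rewrite /Rintegral integralE funerpos funerneg.
have part_le (g : R -> R) : (forall x, 0 <= g x <= `|h x|) ->
    exists2 r, 0 <= r <= K * (b - a) & (\int[mu]_(x in D) (g x)%:E = r%:E)%E.
  move=> gh; have /andP[g0 gK] : (0 <= \int[mu]_(x in D) (g x)%:E <= (K * (b - a))%:E)%E.
    rewrite integral_ge0 => [|x _]; last by rewrite lee_fin; case/andP: (gh x).
    apply: ge0_integral_le_indic => // x Dx.
    by case/andP: (gh x) => g0 /le_trans/(_ (hK x Dx)); rewrite !lee_fin g0.
  have gfin : (\int[mu]_(x in D) (g x)%:E)%E \is a fin_num.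
    by rewrite ge0_fin_numE // (le_lt_trans gK) ?ltry.
  exists (fine (\int[mu]_(x in D) (g x)%:E)); last by rewrite fineK.
  by rewrite -!lee_fin fineK // g0.
have [p /andP[p0 pK] ->] : exists2 p, 0 <= p <= K * (b - a) &
    (\int[mu]_(x in D) (EFin \o h^\+%R) x)%E = p%:E.
  by apply: part_le => x; rewrite funrpos_ge0 ge_max normr_ge0 ler_norm.
have [n /andP[n0 nK] ->] : exists2 n, 0 <= n <= K * (b - a) &
    (\int[mu]_(x in D) (EFin \o h^\-%R) x)%E = n%:E.
  by apply: part_le => x; rewrite funrneg_ge0 ge_max normr_ge0 -normrN ler_norm.
rewrite -EFinD /= ler_norml; lra.
Qed.
End integral_bounds.

Section kernel.
Context {R : realType}.

Lemma ger_powRN (r x y : R) : 0 <= r -> 0 < x -> x <= y -> y `^ (- r) <= x `^ (- r).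
Proof.
move=> r0 x0 xy; have y0 := lt_le_trans x0 xy.
rewrite !powRN lef_pV2 ?posrE ?powR_gt0 //.
by apply: ge0_ler_powR; rewrite // nnegrE ltW.
Qed.

Lemma mul_sqr_sqrt_divB (s t : R) : 0 < s -> 0 < t ->
  s * t * (Num.sqrt (t / s) - (Num.sqrt (t / s))^-1) ^+ 2 = (t - s) ^+ 2.
Proof.
move=> s0 t0; have q0 : 0 < Num.sqrt (t / s) by rewrite sqrtr_gt0 divr_gt0.
have q2 : Num.sqrt (t / s) ^+ 2 = t / s by rewrite sqr_sqrtr // divr_ge0 ?ltW.
have -> : (Num.sqrt (t / s) - (Num.sqrt (t / s))^-1) ^+ 2 =
    Num.sqrt (t / s) ^+ 2 - 2 + (Num.sqrt (t / s) ^+ 2)^-1.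
  by field; rewrite gt_eqF.
by rewrite q2; field; rewrite !gt_eqF.
Qed.

Lemma scrK_kernel_le (theta a s t : R) : 0 < theta < pi -> 0 < a <= s -> 0 < t ->
  (s * t) `^ (- 4^-1) * frakK theta (t / s) <=
  (sin theta * Num.max a t) `^ (- 2^-1).
Proof.
move=> theta_pi /andP[a0 aS] t0; have s0 := lt_le_trans a0 aS.
have sin0 : 0 < sin theta by exact: sin_gt0_pi.
have sin1 : sin theta ^+ 2 <= 1 by rewrite sin2cos2 lerBlDr lerDl sqr_ge0.
have m0 : 0 < sin theta * Num.max a t by rewrite mulr_gt0 // lt_max a0.
rewrite /frakK -powRM; last 2 first.
- by rewrite mulr_ge0 ?ltW.
- by rewrite addr_ge0 ?sqr_ge0 // mulr_ge0 ?sqr_ge0.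
rewrite mulrDr mul_sqr_sqrt_divB //.
have -> : (sin theta * Num.max a t) `^ (- 2^-1) =
    ((sin theta * Num.max a t) ^+ 2) `^ (- 4^-1).
  by rewrite -powR_mulrn ?ltW // -powRrM; congr (_ `^ _); field.
apply: ger_powRN; rewrite ?exprn_gt0 ?invr_ge0 //.
have max_le : Num.max a t ^+ 2 <= t ^+ 2 + s ^+ 2.
  by case: (leP a t) => _; nra.
(* [4 S s t + (t - s)^2 - S (t^2 + s^2) = (1 - S) (t - s)^2 + 2 S s t] *)
rewrite exprMn; move: sin1; set S := sin theta ^+ 2 => S1.
have S0 : 0 < S by rewrite exprn_gt0.
have := ler_wpM2l (ltW S0) max_le.
have : 0 <= (1 - S) * (t - s) ^+ 2 by rewrite mulr_ge0 ?sqr_ge0 ?subr_ge0.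
have : 0 <= S * s * t by rewrite !mulr_ge0 ?ltW.
nra.
Qed.

End kernel.

Section scrK_pointwise.
Context {R : realType}.

Lemma Cinf0_Rplus_bounded (u : R -> R) :
  Cinf0_Rplus u -> exists M, forall s, `|u s| <= M.
Proof.
move=> [u_smooth [a [b [_ u0]]]].
have cu : continuous (Num.norm \o u).
  move=> x; apply: continuous_comp; last exact: norm_continuous.
  exact/differentiable_continuous/derivable1_diffP/(u_smooth 0%N x).
have a_le_max : a <= Num.max a b by rewrite le_max lexx.
have [c _ uc] := EVT_max a_le_max (continuous_subspaceT cu).
exists `|u c| => s; have [sab|] := boolP (s \in `[a, Num.max a b]); first exact: uc.
rewrite in_itv /= negb_and -!ltNge => /orP[sa|bs].
  by rewrite u0 ?normr0 ?normr_ge0 //; left.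
rewrite u0 ?normr0 ?normr_ge0 //; right.
by apply: le_lt_trans bs; rewrite le_max lexx orbT.
Qed.

Lemma scrK_sqr_le (theta a b M t : R) (u : R -> R) : 0 < theta < pi -> 0 < a <= b ->
  (forall s, `|u s| <= M) -> (forall s, s < a \/ b < s -> u s = 0) -> 0 < t ->
  scrK theta u t ^+ 2 <= (M * (b - a)) ^+ 2 / (sin theta * Num.max a t).
Proof.
move=> theta_pi /andP[a0 ab] uM u0 t0.
have M0 : 0 <= M := le_trans (normr_ge0 _) (uM 0).
have m0 : 0 < sin theta * Num.max a t by rewrite mulr_gt0 ?sin_gt0_pi // lt_max a0.
set G := (sin theta * Num.max a t) `^ (- 2^-1).
have G0 : 0 <= G := powR_ge0 _ _.
have scrK_le : `|scrK theta u t| <= G * M * (b - a).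
  apply: normr_Rintegral_le_indic; rewrite ?mulr_ge0 // => s /=.
  rewrite in_itv /= andbT indicE => s0.
  have [sab|sab] := boolP (s \in `[a, b]%classic).
    move: sab; rewrite in_setE /= in_itv /= => /andP[aS _].
    rewrite mulr1 normrM ler_pM ?normr_ge0 // ger0_norm ?mulr_ge0 ?powR_ge0 //.
    by rewrite scrK_kernel_le ?a0.
  rewrite mulr0 u0 ?mulr0 ?normr0 //.
  move: sab; rewrite notin_setE /= in_itv /= => /negP.
  by rewrite negb_and -!ltNge => /orP[]; [left|right].
have G2 : G ^+ 2 = (sin theta * Num.max a t)^-1.
  rewrite /G -powR_mulrn // -powRrM mulNr mulVf ?pnatr_eq0 //.
  by rewrite powR_inv1 ?ltW.
rewrite -real_normK ?num_real // (le_trans (_ : _ <= (G * M * (b - a)) ^+ 2)) //.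
  by rewrite lerXn2r ?nnegrE ?normr_ge0 ?(le_trans _ scrK_le).
by rewrite -mulrA exprMn G2 mulrC.
Qed.

Lemma Cinf0_Rplus_scrK_sqr_le (theta : R) (u : R -> R) :
  0 < theta < pi -> Cinf0_Rplus u -> exists C a, [/\ 0 <= C, 0 < a &
    forall t, 0 < t -> scrK theta u t ^+ 2 <= C / Num.max a t].
Proof.
move=> theta_pi u_Cinf0; have [M uM] := Cinf0_Rplus_bounded _ u_Cinf0.
case: u_Cinf0 => _ [a [b [a0 u0]]]; set b' := Num.max a b.
have sin0 : 0 < sin theta by exact: sin_gt0_pi.
exists ((M * (b' - a)) ^+ 2 / sin theta), a; split => // [|t t0].
  by rewrite divr_ge0 ?sqr_ge0 ?ltW.
rewrite -mulrA -invfM (@scrK_sqr_le theta a b' M t u) // ?a0 ?le_max ?lexx //.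
move=> s [sa|b's]; apply: u0; [by left|right].
by apply: le_lt_trans b's; rewrite le_max lexx orbT.
Qed.

End scrK_pointwise.

Section dyadic_shells.
Context {R : realType}.
Local Notation mu := (@lebesgue_measure R).

Lemma eseries_geometric (C z : R) : 0 <= z < 1 ->
  (\sum_(i <oo) (C * z ^+ i)%:E = (C / (1 - z))%:E)%E.
Proof.
move=> /andP[z0 z1]; apply/cvg_lim => //.
apply: cvg_EFin; first by apply: nearW => n; rewrite sumEFin.
rewrite (_ : (fine \o _) = series (geometric C z)).
  by apply: cvg_geometric_series; rewrite ger0_norm.
by apply/funext => n; rewrite /= sumEFin /= /series /=.
Qed.

Lemma exists_lt_exp2S (x : R) : exists n, x < 2 ^+ n.+1.
Proof.
exists (Num.bound `|x|); rewrite (le_lt_trans (ler_norm x)) //.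
rewrite (lt_trans (archi_boundP (normr_ge0 x))) // -natrX ltr_nat.
exact: ltn_trans (ltnSn _) (ltn_expl _ (ltnSn 1)).
Qed.

Lemma itv1y_bigcup_dyadic :
  `[1, +oo[%classic = \bigcup_n `[2 ^+ n, 2 * 2 ^+ n[%classic :> set R.
Proof.
apply/seteqP; split => [t|t [n _]] /=; rewrite !in_itv /= ?andbT; last first.
  by case/andP=> + _; apply: le_trans; rewrite exprn_ege1 ?ler1n.
move=> t1; have [n tn n_min] := ex_minnP (exists_lt_exp2S t).
exists n => //=; rewrite in_itv /= -exprS tn andbT.
case: n tn n_min => [|n] _ n_min; first by rewrite expr0.
by rewrite leNgt; apply/negP => /n_min; rewrite ltnn.
Qed.

Lemma mul2_invexp2S (n : nat) : 2 * 2 ^- n.+1 = 2 ^- n :> R.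
Proof. by rewrite exprS invfM mulrA mulfV ?mul1r ?pnatr_eq0. Qed.

Lemma itv01_bigcup_dyadic :
  `]0, 1[%classic = \bigcup_n `[2 ^- n.+1, 2 * 2 ^- n.+1[%classic :> set R.
Proof.
apply/seteqP; split => [t|t [n _]] /=; rewrite !in_itv /= ?mul2_invexp2S; last first.
  case/andP=> lo hi; rewrite (lt_le_trans _ lo) ?invr_gt0 ?exprn_gt0 //=.
  by rewrite (lt_le_trans hi) // invf_le1 ?exprn_gt0 ?exprn_ege1 ?ler1n.
case/andP=> t0 t1.
have exP : exists n, 2 ^- n.+1 <= t.
  have [n tn] := exists_lt_exp2S t^-1; exists n.
  by rewrite -[t]invrK lef_pV2 ?posrE ?invr_gt0 ?exprn_gt0 // ltW.
have [n tn n_min] := ex_minnP exP.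
exists n => //=; rewrite in_itv /= tn mul2_invexp2S /=.
case: n tn n_min => [|n] _ n_min; first by rewrite expr0 invr1.
by rewrite ltNge; apply/negP => /n_min; rewrite ltnn.
Qed.

Lemma trivIset_itv_co (l r : nat -> R) :
  (forall i j, (i < j)%N -> (r j <= l i) || (r i <= l j)) ->
  trivIset setT (fun n => `[l n, r n[%classic).
Proof.
move=> lr; have disj i j : (i < j)%N -> `[l i, r i[ `&` `[l j, r j[ = set0 :> set R.
  move=> lt_ij; apply/seteqP; split => // x [] /=; rewrite !in_itv /=.
  move=> /andP[li ri] /andP[lj rj]; case/orP: (lr _ _ lt_ij).
    by move/(lt_le_trans rj); rewrite ltNge li.
  by move/(lt_le_trans ri); rewrite ltNge lj.
apply/trivIsetP => i j _ _; case: ltngtP => [/disj|/disj|] //.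
by rewrite setIC.
Qed.

Lemma powR_exprn (x r : R) (n : nat) : 0 <= x -> (x ^+ n) `^ r = (x `^ r) ^+ n.
Proof.
move=> x0; rewrite -powR_mulrn // -powRrM mulrC powRrM powR_mulrn //.
exact: powR_ge0.
Qed.

Lemma powR_le_dyadic (l t p : R) : 0 < l <= t -> t <= 2 * l ->
  t `^ p <= 2 `^ `|p| * l `^ p.
Proof.
move=> /andP[l0 lt] t2l; have t0 := lt_le_trans l0 lt.
have [p0|p0] := leP 0 p.
  rewrite ger0_norm // -powRM // ?(ltW l0) //.
  by apply: ge0_ler_powR; rewrite // nnegrE ltW // mulr_gt0.
have tl : t `^ p <= l `^ p.
  by have := @ger_powRN R (- p) l t; rewrite opprK oppr_ge0; apply => //; exact: ltW.
rewrite ltr0_norm // (le_trans tl) // ler_peMl ?powR_ge0 //.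
by rewrite -[leLHS](powRr0 2); apply: ler_powR; rewrite ?ler1n // oppr_ge0 ltW.
Qed.

Lemma integral_powR_dyadic_le (l p : R) : 0 < l ->
  (\int[mu]_(t in `[l, (2 * l)%R[) (t `^ p)%:E <= (2 `^ `|p| * l `^ (p + 1))%:E)%E.
Proof.
move=> l0; have l2l : l <= 2 * l by rewrite ler_peMl ?ler1n ?ltW.
apply: (le_trans (@ge0_integral_le_indic R _ _ (2 `^ `|p| * l `^ p) _ _ _ l2l _)).
- by rewrite mulr_ge0 ?powR_ge0.
- move=> t /=; rewrite in_itv /= => /andP[lt t2l].
  rewrite indicE mem_set /=; last by rewrite in_itv /= lt ltW.
  by rewrite mulr1 !lee_fin powR_ge0 powR_le_dyadic ?l0 ?lt ?ltW.
have -> : 2 * l - l = l by ring.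
rewrite lee_fin powRD ?powRr1 ?mulrA //; first exact: ltW.
by apply/implyP => _; rewrite gt_eqF.
Qed.

Lemma integral_powR_bigcup_dyadic_lty (p C z : R) (l : nat -> R) :
  (forall n, 0 < l n) -> trivIset setT (fun n => `[l n, 2 * l n[%classic) ->
  0 <= z < 1 -> (forall n, l n `^ (p + 1) <= C * z ^+ n) ->
  (\int[mu]_(t in \bigcup_n `[l n, (2 * l n)%R[%classic) (t `^ p)%:E < +oo)%E.
Proof.
move=> l0 shells_disj z01 l_geom.
rewrite ge0_integral_bigcup //; last 2 first.
- by apply/measurable_EFinP/measurable_funTS; exact: measurable_powR.
- by move=> t _; rewrite lee_fin powR_ge0.
apply: (le_lt_trans (lee_nneseries (v := fun n => (2 `^ `|p| * C * z ^+ n)%:E) _ _)).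
- by move=> n _ _; apply: integral_ge0 => t _; rewrite lee_fin powR_ge0.
- move=> n _; apply: (le_trans (integral_powR_dyadic_le _ p (l0 n))).
  by rewrite lee_fin -mulrA ler_wpM2l ?powR_ge0.
by rewrite eseries_geometric // ltry.
Qed.

Lemma integral_powR_itv01_lty (p : R) : -1 < p ->
  (\int[mu]_(t in `]0%R, 1%R[) (t `^ p)%:E < +oo)%E.
Proof.
move=> p1; rewrite itv01_bigcup_dyadic.
set z : R := 2^-1 `^ (p + 1).
apply: (@integral_powR_bigcup_dyadic_lty p z z) => [n|||n].
- by rewrite invr_gt0 exprn_gt0.
- apply: trivIset_itv_co => i j ij; apply/orP; left.
  rewrite mul2_invexp2S lef_pV2 ?posrE ?exprn_gt0 //.
  by apply: ler_weXn2l; rewrite ?ler1n.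
- have one : 1 `^ (p + 1) = 1 :> R by rewrite powR1.
  rewrite powR_ge0 /= -[ltRHS]one.
  by apply: gt0_ltr_powR; rewrite ?nnegrE ?invr_ge0 //; lra.
- by rewrite -exprVn powR_exprn ?invr_ge0 // exprS.
Qed.

Lemma integral_powR_itv1y_lty (p : R) : p < -1 ->
  (\int[mu]_(t in `[1%R, +oo[) (t `^ p)%:E < +oo)%E.
Proof.
move=> p1; rewrite itv1y_bigcup_dyadic.
apply: (@integral_powR_bigcup_dyadic_lty p 1 (2 `^ (p + 1))) => [n|||n].
- by rewrite exprn_gt0.
- apply: trivIset_itv_co => i j ij; apply/orP; right.
  by rewrite -exprS; apply: ler_weXn2l; rewrite ?ler1n.
- rewrite powR_ge0 /= -[p + 1]opprK powRN invf_lt1 ?powR_gt0 //.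
  have one : 1 `^ (- (p + 1)) = 1 :> R by rewrite powR1.
  by rewrite -[ltLHS]one; apply: gt0_ltr_powR; rewrite ?nnegrE ?ltr1n //; lra.
- by rewrite powR_exprn // mul1r.
Qed.

End dyadic_shells.

Section weighted_integral.
Context {R : realType}.
Local Notation mu := (@lebesgue_measure R).

Lemma integral_powR_div_max_lty (E a p : R) : 0 <= E -> 0 < a -> -1 < p < 0 ->
  (\int[mu]_(t in `]0%R, +oo[) (E * t `^ p / Num.max a t)%:E < +oo)%E.
Proof.
move=> E0 a0 /andP[p_gt p_lt].
have max0 t : 0 < Num.max a t by rewrite lt_max a0.
have G0 t : 0 <= E * t `^ p / Num.max a t.
  by rewrite divr_ge0 ?mulr_ge0 ?powR_ge0 ?(ltW (max0 t)).
have mG : measurable_fun setT (fun t => E * t `^ p / Num.max a t).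
  rewrite (_ : (fun t => _) =
      (fun t => E * t `^ p) \* ((@powR R)^~ (-1) \o (fun t => Num.max a t))).
    apply: measurable_funM; first by apply: measurable_funM => //; exact: measurable_powR.
    apply: measurableT_comp; first exact: measurable_powR.
    by rewrite (_ : (fun t => _) = cst a \max id) //; exact: measurable_maxr.
  by apply/funext => t; rewrite /= powR_inv1 ?ltW.
have -> : `]0, +oo[%classic = `]0, 1[%classic `|` `[1, +oo[%classic :> set R.
  apply/seteqP; split => t /=; rewrite !in_itv /= ?andbT.
    by move=> t0; case: (ltP t 1) => t1; [left; apply/andP | right].
  by case=> [/andP[]//|/(lt_le_trans ltr01)].
rewrite ge0_integral_setU //; last 3 first.
- exact/measurable_EFinP/measurable_funTS.
- by move=> t _; rewrite lee_fin G0.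
- rewrite disj_set2E; apply/eqP/seteqP; split => // t [] /=; rewrite !in_itv /=.
  by move=> /andP[_ t1] /andP[/(lt_le_trans t1)]; rewrite ltxx.
apply: lte_add_pinfty.
- apply: (@integral_lty_dominated _ _ _ mu _ _ _ (E / a) _ (measurable_funTS (measurable_powR p))).
  + exact: measurable_itv.
  + by rewrite divr_ge0 // ltW.
  + by move=> t _; exact: powR_ge0.
  + move=> t; rewrite /= in_itv /= => /andP[t0 _]; rewrite G0 /=.
    rewrite mulrAC ler_wpM2r ?powR_ge0 // ler_wpM2l // lef_pV2 ?posrE //.
    by rewrite le_max lexx.
  + exact: integral_powR_itv01_lty.
- apply: (@integral_lty_dominated _ _ _ mu _ _ _ E _ (measurable_funTS (measurable_powR (p - 1)))).
  + exact: measurable_itv.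
  + by [].
  + by move=> t _; exact: powR_ge0.
  + move=> t; rewrite /= in_itv /= andbT => t1; rewrite G0 /=.
    have t0 : 0 < t := lt_le_trans ltr01 t1.
    rewrite powRB ?(gt_eqF t0) ?implybT // (powRr1 (ltW t0)).
    rewrite mulrA ler_wpM2l ?mulr_ge0 ?powR_ge0 // lef_pV2 ?posrE //.
    by rewrite le_max lexx orbT.
  + by apply: integral_powR_itv1y_lty; lra.
Qed.

End weighted_integral.

Theorem lemma7 (R : realType) (theta : R) (ur ui : R -> R)
  (htheta : 0 < theta < pi) (hur : Cinf0_Rplus ur) (hui : Cinf0_Rplus ui)
  (beta : R) (hbeta : 0 < beta < 2^-1) :
  (\int[@lebesgue_measure R]_(t in (`]0%R, +oo[ : set R))
     (((scrK theta ur t) ^+ 2 + (scrK theta ui t) ^+ 2) * t `^ (2 * beta) / t)%:E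
   < +oo)%E.
Proof.
have [Cr [ar [Cr0 ar0 Kr_le]]] := Cinf0_Rplus_scrK_sqr_le _ _ htheta hur.
have [Ci [ai [Ci0 ai0 Ki_le]]] := Cinf0_Rplus_scrK_sqr_le _ _ htheta hui.
set a := Num.min ar ai; have a0 : 0 < a by rewrite lt_min ar0 ai0.
have p_itv : -1 < 2 * beta - 1 < 0 by case/andP: hbeta => *; apply/andP; split; lra.
apply: le_lt_trans (integral_powR_div_max_lty _ _ _ (addr_ge0 Cr0 Ci0) a0 p_itv).
apply: ge0_le_integral_nonmeasurable => t; rewrite /= in_itv /= andbT => t0.
have shrink C b : 0 <= C -> a <= b -> C / Num.max b t <= C / Num.max a t.
  move=> C0 ab; rewrite ler_wpM2l // lef_pV2 ?posrE ?lt_max ?t0 ?orbT //.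
  by rewrite ge_max !le_max ab lexx !orbT.
have K_le : scrK theta ur t ^+ 2 + scrK theta ui t ^+ 2 <= (Cr + Ci) / Num.max a t.
  rewrite mulrDl; apply: lerD.
    by apply: le_trans (Kr_le _ t0) (shrink _ _ Cr0 _); rewrite ge_min lexx.
  by apply: le_trans (Ki_le _ t0) (shrink _ _ Ci0 _); rewrite ge_min lexx orbT.
rewrite -mulrA.
have -> : t `^ (2 * beta) / t = t `^ (2 * beta - 1).
  by rewrite powRB ?(gt_eqF t0) ?implybT // (powRr1 (ltW t0)).
rewrite !lee_fin mulr_ge0 ?addr_ge0 ?sqr_ge0 ?powR_ge0 //= mulrAC.
by rewrite ler_wpM2r ?powR_ge0.
Qed.
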